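(* Let $F$ be any field, $N\in\mathbb{N}$, and $p,p'\in\mathbb{N}$ with $p+p'\le N+1$. If $x\in F^{N+1}$ satisfies $\operatorname{rank}(H_{p-1,p'}(x))\le p'$, then $\operatorname{rank}(H_{p-1,p'}(x))\le \operatorname{rank}(H_{p,p'-1}(x))$.
   Context: $\mathbb{N}=\{0,1,2,\ldots\}$. For $N\in\mathbb{N}$, $x=(x_0,\ldots,x_N)\in F^{N+1}$ and integers $s,t\ge -1$ with $s+t\le N$, the Hankel matrix $H_{s,t}(x)$ is the $(s+1)\times(t+1)$ matrix $(x_{i+j})_{0\le i\le s,\,0\le j\le t}$ (a matrix with zero rows or columns has rank $0$). *)

From HB Require Import structures.
From mathcomp Require Import all_boot all_order all_algebra.
Set Implicit Arguments. Unset Strict Implicit. Unset Printing Implicit Defensive.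
Import GRing.Theory.
Local Open Scope ring_scope.

(* The paper's H_{s,t}(x) is [hankel x (s+1) (t+1)]
   (s,t >= -1, so s+1, t+1 are naturals; zero rows/cols give rank 0).
   Only used when m + n - 2 <= N, so [inord] never falls out of range. *)
Definition hankel (F : fieldType) (N : nat) (x : 'I_N.+1 -> F) (m n : nat)
  : 'M[F]_(m, n) :=
  \matrix_(i < m, j < n) x (inord (i + j)).

From mathcomp Require Import all_boot all_order all_algebra.
From mathcomp Require Import zify.
Set Implicit Arguments. Unset Strict Implicit. Unset Printing Implicit Defensive.
Import GRing.Theory.
Local Open Scope ring_scope.

(* After transposing, the claim reads: with A := hankel x p'.+1 p of rank at
   most p', rank A <= rank B where B := hankel x p' p.+1.  Let A1 be the
   first p' rows of A, i.e. hankel x p' p, a column-prefix of B.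
   Either rank A1 < rank B, and we conclude since adding one row raises the
   rank by at most one; or rank A1 = rank B.  In that case every linear
   recurrence f_0 x_i + ... + f_{p'-1} x_{i+p'-1} = 0 valid for i < p stays
   valid for i = p (equal ranks give equal left kernels).  Since A is rank
   deficient it has a nonzero left-kernel vector, i.e. a recurrence of length
   p'.+1; while its top coefficient vanishes it is a shorter recurrence,
   which extends one step, so shifting its indices gives again a recurrence
   of length p'.+1.  Eventually the top coefficient is nonzero, so the last
   row of A depends on the rows of A1 and rank A = rank A1 = rank B. *)

Section General.
Variable F : fieldType.

(* Selecting columns of B can only enlarge its left kernel; when the rank is
   unchanged the two kernels have the same dimension, hence coincide. *)
Lemma kermx_colsub_rank m n n' (g : 'I_n' -> 'I_n) (B : 'M[F]_(m, n)) :
  \rank (colsub g B) = \rank B -> (kermx (colsub g B) <= kermx B)%MS.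
Proof.
move=> eq_rank.
have sub_ker : (kermx B <= kermx (colsub g B))%MS.
  apply/sub_kermxP; rewrite mulmx_colsub mulmx_ker.
  by apply/matrixP => i j; rewrite !mxE.
by rewrite -(mxrank_leqif_sup sub_ker).2 !mxrank_ker eq_rank.
Qed.

End General.

Section Hankel.
Variables (F : fieldType) (N : nat) (x : 'I_N.+1 -> F).

Lemma hankel_tr m n : (hankel x m n)^T = hankel x n m.
Proof. by apply/matrixP => i j; rewrite !mxE addnC. Qed.

Lemma rank_hankel_tr m n : \rank (hankel x m n) = \rank (hankel x n m).
Proof. by rewrite -mxrank_tr hankel_tr. Qed.

Lemma hankel_rows_sub m1 m2 n :
  (m1 <= m2)%N -> (hankel x m1 n <= hankel x m2 n)%MS.
Proof.
move=> le_m; apply/row_subP => i.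
have -> : row i (hankel x m1 n) = row (widen_ord le_m i) (hankel x m2 n).
  by apply/rowP => j; rewrite !mxE.
exact: row_sub.
Qed.

Lemma hankel_colsub m n :
  hankel x m n = colsub (widen_ord (leqnSn n)) (hankel x m n.+1).
Proof. by apply/matrixP => i j; rewrite !mxE. Qed.

Lemma hankel_rowsS_sub m n :
  (hankel x m.+1 n <= hankel x m n + row ord_max (hankel x m.+1 n))%MS.
Proof.
apply/row_subP => i; have [lt_im|ge_im] := ltnP i m.
  have -> : row i (hankel x m.+1 n) = row (Ordinal lt_im) (hankel x m n).
    by apply/rowP => j; rewrite !mxE.
  exact: submx_trans (row_sub _ _) (addsmxSl _ _).
have -> : i = ord_max by apply/val_inj => /=; have := ltn_ord i; lia.
exact: addsmxSr.
Qed.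

Lemma rank_hankel_rowS m n :
  (\rank (hankel x m.+1 n) <= \rank (hankel x m n) + 1)%N.
Proof.
apply: leq_trans (mxrankS (hankel_rowsS_sub m n)) _.
apply: leq_trans (mxrank_adds_leqif _ _) _.
by rewrite leq_add2l rank_leq_row.
Qed.

(* [annihilates m n f]: the coefficients f_0,...,f_{m-1} give a left-kernel
   vector of hankel x m n, i.e. a linear recurrence satisfied by the windows
   x_i,...,x_{i+m-1} for all i < n. *)
Definition annihilates m n (f : nat -> F) :=
  forall i, (i < n)%N -> \sum_(j < m) f j * x (inord (j + i)) = 0.

Lemma annihilatesE m n f :
  annihilates m n f <-> (\row_(j < m) f j) *m hankel x m n = 0.
Proof.
have entry k : ((\row_(j < m) f j) *m hankel x m n) 0 k
               = \sum_(j < m) f j * x (inord (j + k)).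
  by rewrite !mxE; apply: eq_bigr => j _; rewrite !mxE.
split => [ann | /rowP ker i lt_in].
  by apply/rowP => k; rewrite entry ann // mxE.
by have := ker (Ordinal lt_in); rewrite entry mxE.
Qed.

Lemma annihilates_extend m n f :
  \rank (hankel x m n) = \rank (hankel x m n.+1) ->
  annihilates m n f -> annihilates m n.+1 f.
Proof.
rewrite hankel_colsub => eq_rank /annihilatesE ann; apply/annihilatesE.
apply/sub_kermxP; apply: submx_trans (kermx_colsub_rank eq_rank).
by apply/sub_kermxP; rewrite -hankel_colsub.
Qed.

Definition shift (f : nat -> F) (j : nat) : F :=
  if j is j'.+1 then f j' else 0.

(* A recurrence of length m.+1 whose top coefficient vanishes is really one of
   length m; when such recurrences extend to one more window, the shifted
   recurrence is again valid on n windows. *)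
Lemma annihilates_shift m n f :
  (forall g, annihilates m n g -> annihilates m n.+1 g) ->
  annihilates m.+1 n f -> f m = 0 -> annihilates m.+1 n (shift f).
Proof.
move=> extend ann fm0 i lt_in.
rewrite big_ord_recl mul0r add0r.
under eq_bigr => j _ do rewrite lift0 addSnnS.
apply: (extend f) => // k lt_kn.
by have := ann k lt_kn; rewrite big_ord_recr /= fm0 mul0r addr0.
Qed.

Lemma annihilates_top m n :
  (forall g, annihilates m n g -> annihilates m n.+1 g) ->
  forall d f j, (j + d)%N = m -> f j <> 0 -> annihilates m.+1 n f ->
  exists2 g, annihilates m.+1 n g & g m <> 0.
Proof.
move=> extend; elim=> [|d IHd] f j def_m fj0 ann.
  by rewrite addn0 in def_m; subst j; exists f.
have [fm0|fm_neq0] := eqVneq (f m) 0; last by exists f => //; apply/eqP.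
by apply: (IHd (shift f) j.+1); rewrite ?addSnnS //; apply: annihilates_shift.
Qed.

Lemma hankel_last_row_dependent m n g :
  annihilates m.+1 n g -> g m <> 0 ->
  (hankel x m.+1 n <= hankel x m n)%MS.
Proof.
move=> ann /eqP gm_neq0.
apply: submx_trans (hankel_rowsS_sub m n) _; rewrite addsmx_sub submx_refl /=.
have -> : row ord_max (hankel x m.+1 n) =
          (\row_(j < m) (- g j / g m)) *m hankel x m n.
  apply/rowP => k; have := ann k (ltn_ord k).
  rewrite big_ord_recr /= => /eqP; rewrite addr_eq0 => /eqP top.
  rewrite !mxE; under eq_bigr => j _ do rewrite !mxE mulrAC !mulNr.
  by rewrite sumrN -mulr_suml top mulNr opprK mulrAC divff // mul1r.
exact: submxMl.
Qed.

Lemma hankel_annihilator m n :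
  (\rank (hankel x m.+1 n) <= m)%N ->
  exists f, exists2 j, (j <= m)%N & f j <> 0 /\ annihilates m.+1 n f.
Proof.
move=> low_rank.
have : kermx (hankel x m.+1 n) != 0.
  by rewrite kermx_eq0 /row_free ltn_eqF // ltnS.
case/rowV0Pn => v /sub_kermxP ker /rV0Pn [j vj0].
exists (fun k => v 0 (inord k)), j; first by rewrite -ltnS.
split; first by rewrite inord_val; apply/eqP.
apply/annihilatesE; rewrite -ker; congr (_ *m _).
by apply/rowP => k; rewrite mxE inord_val.
Qed.

Lemma rank_hankel_rowS_stable m n :
  \rank (hankel x m n) = \rank (hankel x m n.+1) ->
  (\rank (hankel x m.+1 n) <= m)%N ->
  (\rank (hankel x m.+1 n) <= \rank (hankel x m n))%N.
Proof.
move=> eq_rank low_rank.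
have extend g : annihilates m n g -> annihilates m n.+1 g.
  exact: annihilates_extend eq_rank.
have [f [j le_jm [fj0 ann_f]]] := hankel_annihilator low_rank.
have [g ann_g gm0] := annihilates_top extend (subnKC le_jm) fj0 ann_f.
exact: mxrankS (hankel_last_row_dependent ann_g gm0).
Qed.

End Hankel.

Theorem lemma7 (F : fieldType) (N p p' : nat) (x : 'I_N.+1 -> F) :
  (p + p' <= N.+1)%N ->
  (\rank (hankel x p p'.+1) <= p')%N ->
  (\rank (hankel x p p'.+1) <= \rank (hankel x p.+1 p'))%N.
Proof.
move=> _; rewrite (rank_hankel_tr x p) (rank_hankel_tr x p.+1) => low_rank.
have sub_rank : (\rank (hankel x p' p) <= \rank (hankel x p' p.+1))%N.
  rewrite (rank_hankel_tr x p') (rank_hankel_tr x p').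
  exact/mxrankS/hankel_rows_sub.
have [lt_rank|ge_rank] := ltnP (\rank (hankel x p' p)) (\rank (hankel x p' p.+1)).
  by apply: leq_trans (rank_hankel_rowS x p' p) _; rewrite addn1.
have eq_rank : \rank (hankel x p' p) = \rank (hankel x p' p.+1).
  by apply/eqP; rewrite eqn_leq sub_rank.
exact: leq_trans (rank_hankel_rowS_stable eq_rank low_rank) sub_rank.
Qed.
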